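(* Let $P:\mathcal C^{op}\to\mathbf{Pos}$ be a doctrine and $\mathsf K=(K,\kappa,\mu,\nu)$ a comonad on $P$ in $\mathbf{IdxPos}$ (so $(K,\mu,\nu)$ is a comonad on $\mathcal C$, $\kappa:P\Rightarrow PK^{op}$ is natural, and $\kappa_X\le P(\mu_X)\circ\kappa_{KX}\circ\kappa_X$, $\kappa_X\le P(\nu_X)$). Let $\mathcal C_K$ be the category of $K$-coalgebras $(C,c)$, $c:C\to KC$, with coalgebra morphisms, and let $P^{\mathsf K}:\mathcal C_K^{op}\to\mathbf{Pos}$ be the doctrine with $P^{\mathsf K}(C,c)=\{\alpha\in PC\mid\alpha\le P(c)(\kappa_C(\alpha))\}$ (suborder of $PC$) and reindexing along a coalgebra morphism $t$ given by the restriction of $P(t)$. Let $(U,u):P^{\mathsf K}\to P$ be the 1-arrow with $U:\mathcal C_K\to\mathcal C$ the forgetful functor and $u_{(C,c)}:P^{\mathsf K}(C,c)\hookrightarrow PC$ the inclusion, and let $\omega:(U,u)\Rightarrow(K,\kappa)\circ(U,u)$ be the 2-arrow with $\omega_{(C,c)}=c$. Then $(P^{\mathsf K},(U,u),\omega)$ is the Eilenberg-Moore construction for $\mathsf K$ in $\mathbf{IdxPos}$, namely: (a) for every doctrine $Q:\mathcal D^{op}\to\mathbf{Pos}$, every 1-arrow $(X,x):Q\to P$ and every 2-arrow $\xi:(X,x)\Rightarrow(K,\kappa)\circ(X,x)$ in $\mathbf{IdxPos}$ satisfying $(\mu X)\cdot\xi=(K\xi)\cdot\xi$ and $(\nu X)\cdot\xi=\mathrm{id}_X$,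 there is a unique 1-arrow $(X',x'):Q\to P^{\mathsf K}$ with $(U,u)\circ(X',x')=(X,x)$ and $\omega(X',x')=\xi$ (i.e. $\omega_{X'D}=\xi_D$ for all $D$); (b) for two such pairs $((X,x),\xi)$, $((Y,y),\zeta)$ with induced $(X',x'),(Y',y')$, and every 2-arrow $\gamma:(X,x)\Rightarrow(Y,y)$ with $\zeta\cdot\gamma=(K\gamma)\cdot\xi$, there is a unique 2-arrow $\gamma':(X',x')\Rightarrow(Y',y')$ in $\mathbf{IdxPos}$ with $U\gamma'=\gamma$.
   Context: A doctrine is a functor $P:\mathcal C^{op}\to\mathbf{Pos}$; for $t:X\to Y$, $P(t):PY\to PX$ is reindexing. In the 2-category $\mathbf{IdxPos}$, a 1-arrow $(F,f):P\to Q$ (with $P:\mathcal C^{op}\to\mathbf{Pos}$, $Q:\mathcal D^{op}\to\mathbf{Pos}$) is a functor $F:\mathcal C\to\mathcal D$ with a natural transformation $f:P\Rightarrow Q\circ F^{op}$; a 2-arrow $\theta:(F,f)\Rightarrow(F',f')$ is a natural transformation $\theta:F\Rightarrow F'$ with $f_X(\alpha)\le Q(\theta_X)(f'_X(\alpha))$ for all $X,\alpha$; composition of $(G,g)$ then $(F,f)$ is $(FG,(fG^{op})\cdot g)$ (components $f_{GX}\circ g_X$), and vertical/horizontal composition of 2-arrows is that of natural transformations. A $K$-coalgebra for a comonad $(K,\mu,\nu)$ on $\mathcal C$ is $(C,c)$ with $c:C\to KC$, $\nu_C\circ c=\mathrm{id}_C$, $\mu_C\circ c=Kc\circ c$; a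 morphism $t:(C,c)\to(C',c')$ is $t:C\to C'$ with $c'\circ t=Kt\circ c$. *)

From Stdlib Require Import ProofIrrelevance JMeq.
Set Implicit Arguments.
Unset Strict Implicit.

Record Category := {
  ob :> Type;
  hom : ob -> ob -> Type;
  idm : forall a, hom a a;
  cmp : forall a b c, hom b c -> hom a b -> hom a c;
  cmp_idl : forall a b (f : hom a b), cmp (idm b) f = f;
  cmp_idr : forall a b (f : hom a b), cmp f (idm a) = f;
  cmp_assoc : forall a b c d (f : hom a b) (g : hom b c) (h : hom c d),
      cmp h (cmp g f) = cmp (cmp h g) f
}.
Arguments hom {_} _ _.
Arguments idm {_} _.
Arguments cmp {_ _ _ _} _ _.
Notation "g ∘ f" := (cmp g f) (at level 40, left associativity).

Record Functor (C D : Category) := {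
  fobj :> C -> D;
  fmap : forall a b, hom a b -> hom (fobj a) (fobj b);
  fmap_id : forall a, fmap (idm a) = idm (fobj a);
  fmap_cmp : forall a b c (f : hom a b) (g : hom b c), fmap (g ∘ f) = fmap g ∘ fmap f
}.
Arguments fmap {C D} _ {a b} _.

Definition FComp (C D E : Category) (F : Functor D E) (G : Functor C D) : Functor C E.
Proof.
  refine {| fobj := fun a => F (G a); fmap := fun a b f => fmap F (fmap G f) |}.
  - intro a; rewrite !fmap_id; reflexivity.
  - intros; rewrite !fmap_cmp; reflexivity.
Defined.

Definition FId (C : Category) : Functor C C.
Proof.
  refine {| fobj := fun a => a; fmap := fun a b f => f |}; reflexivity.
Defined.

Record NatTrans (C D : Category) (F G : Functor C D) := {
  ncomp :> forall a, hom (F a) (G a);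
  naturality : forall a b (f : hom a b), fmap G f ∘ ncomp a = ncomp b ∘ fmap F f
}.

Record Doctrine (C : Category) := {
  fib :> C -> Type;
  fle : forall X, fib X -> fib X -> Prop;
  fle_refl : forall X (a : fib X), fle a a;
  fle_trans : forall X (a b c : fib X), fle a b -> fle b c -> fle a c;
  fle_antisym : forall X (a b : fib X), fle a b -> fle b a -> a = b;
  reidx : forall X Y, hom X Y -> fib Y -> fib X;
  reidx_mono : forall X Y (t : hom X Y) a b, fle a b -> fle (reidx t a) (reidx t b);
  reidx_id : forall X a, reidx (idm X) a = a;
  reidx_cmp : forall X Y Z (t : hom X Y) (s : hom Y Z) a,
      reidx (s ∘ t) a = reidx t (reidx s a)
}.
Arguments fle {C} d {X} _ _.
Arguments reidx {C} d {X Y} _ _.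

Record Arrow1 (C D : Category) (P : Doctrine C) (Q : Doctrine D) := {
  a_fun : Functor C D;
  a_tr : forall X, P X -> Q (a_fun X);
  a_mono : forall X (a b : P X), fle P a b -> fle Q (a_tr a) (a_tr b);
  a_nat : forall X Y (t : hom X Y) (b : P Y),
      a_tr (reidx P t b) = reidx Q (fmap a_fun t) (a_tr b)
}.
Arguments a_fun {C D P Q} _.
Arguments a_tr {C D P Q} _ {X} _.

Record Arrow2 (C D : Category) (P : Doctrine C) (Q : Doctrine D) (F G : Arrow1 P Q) := {
  t_nat : NatTrans (a_fun F) (a_fun G);
  t_le : forall X (a : P X), fle Q (a_tr F a) (reidx Q (t_nat X) (a_tr G a))
}.
Arguments t_nat {C D P Q F G} _.

Definition comp1 (C D E : Category) (P : Doctrine C) (Q : Doctrine D) (R : Doctrine E)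
  (F : Arrow1 Q R) (G : Arrow1 P Q) : Arrow1 P R.
Proof.
  refine {| a_fun := FComp (a_fun F) (a_fun G);
            a_tr := fun X a => a_tr F (a_tr G a) |}.
  - intros X a b h; apply (a_mono F), (a_mono G), h.
  - intros X Y t b; simpl; rewrite (a_nat G), (a_nat F); reflexivity.
Defined.

Definition id1 (C : Category) (P : Doctrine C) : Arrow1 P P.
Proof.
  refine {| a_fun := FId C; a_tr := fun X a => a |}; auto.
Defined.

Record IdxComonad (C : Category) (P : Doctrine C) := {
  cm_arr : Arrow1 P P;
  cm_mu : Arrow2 cm_arr (comp1 cm_arr cm_arr);
  cm_nu : Arrow2 cm_arr (id1 P);
  cm_coassoc : forall X,
      fmap (a_fun cm_arr) (t_nat cm_mu X) ∘ t_nat cm_mu X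
      = t_nat cm_mu (a_fun cm_arr X) ∘ t_nat cm_mu X;
  cm_counit1 : forall X, t_nat cm_nu (a_fun cm_arr X) ∘ t_nat cm_mu X = idm (a_fun cm_arr X);
  cm_counit2 : forall X,
      fmap (a_fun cm_arr) (t_nat cm_nu X) ∘ t_nat cm_mu X = idm (a_fun cm_arr X)
}.
Arguments cm_arr {C P} _.
Arguments cm_mu {C P} _.
Arguments cm_nu {C P} _.

Section EM.
Variables (C : Category) (P : Doctrine C) (M : IdxComonad P).
Local Notation K := (a_fun (cm_arr M)).
Local Notation kappa := (a_tr (cm_arr M)).
Local Notation mu := (t_nat (cm_mu M)).
Local Notation nu := (t_nat (cm_nu M)).

Record Coalg := {
  co_car : C;
  co_str : hom co_car (K co_car);
  co_counit : nu co_car ∘ co_str = idm co_car;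
  co_coassoc : mu co_car ∘ co_str = fmap K co_str ∘ co_str
}.

Record CoalgHom (A B : Coalg) := {
  ch_map : hom (co_car A) (co_car B);
  ch_ax : co_str B ∘ ch_map = fmap K ch_map ∘ co_str A
}.

Lemma CoalgHom_eq (A B : Coalg) (f g : CoalgHom A B) : ch_map f = ch_map g -> f = g.
Proof.
  destruct f as [f hf], g as [g hg]; simpl; intros ->.
  rewrite (proof_irrelevance _ hf hg); reflexivity.
Qed.

Definition ch_id (A : Coalg) : CoalgHom A A.
Proof.
  refine {| ch_map := idm (co_car A) |}.
  rewrite fmap_id, cmp_idl, cmp_idr; reflexivity.
Defined.

Definition ch_cmp (A B D : Coalg) (g : CoalgHom B D) (f : CoalgHom A B) : CoalgHom A D.
Proof.
  refine {| ch_map := ch_map g ∘ ch_map f |}.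
  rewrite cmp_assoc, (ch_ax g), <- cmp_assoc, (ch_ax f), cmp_assoc, fmap_cmp.
  reflexivity.
Defined.

Definition CoalgCat : Category.
Proof.
  refine {| ob := Coalg; hom := CoalgHom; idm := ch_id; cmp := ch_cmp |}.
  - intros; apply CoalgHom_eq; simpl; apply cmp_idl.
  - intros; apply CoalgHom_eq; simpl; apply cmp_idr.
  - intros; apply CoalgHom_eq; simpl; apply cmp_assoc.
Defined.

Lemma sig_eq (T : Type) (R : T -> Prop) (a b : {x : T | R x}) :
  proj1_sig a = proj1_sig b -> a = b.
Proof.
  destruct a as [a ha], b as [b hb]; simpl; intros ->.
  rewrite (proof_irrelevance _ ha hb); reflexivity.
Qed.

Definition PKfib (A : Coalg) : Type :=
  {a : P (co_car A) | fle P a (reidx P (co_str A) (kappa a))}.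

Definition PKreidx (A B : Coalg) (t : CoalgHom A B) (b : PKfib B) : PKfib A.
Proof.
  exists (reidx P (ch_map t) (proj1_sig b)).
  destruct b as [b hb]; simpl.
  rewrite (a_nat (cm_arr M)), <- reidx_cmp, <- (ch_ax t), reidx_cmp.
  apply reidx_mono, hb.
Defined.

Definition PK : Doctrine CoalgCat.
Proof.
  refine {| fib := PKfib : CoalgCat -> Type;
            fle := fun A a b => fle P (proj1_sig a) (proj1_sig b);
            reidx := PKreidx |}.
  - intros; apply fle_refl.
  - intros X a b c; apply fle_trans.
  - intros X a b h1 h2; apply sig_eq, fle_antisym; assumption.
  - intros X Y t a b h; simpl; apply reidx_mono, h.
  - intros X a; apply sig_eq; simpl; apply reidx_id.
  - intros; apply sig_eq; simpl; apply reidx_cmp.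
Defined.

Definition UF : Functor CoalgCat C.
Proof.
  refine {| fobj := (co_car : CoalgCat -> C);
            fmap := fun A B (t : hom A B) => ch_map t |}; reflexivity.
Defined.

Definition Uu : Arrow1 PK P.
Proof.
  refine {| a_fun := UF; a_tr := fun A (a : PK A) => proj1_sig a |}; auto.
Defined.

Definition omega_nat : NatTrans (a_fun Uu) (a_fun (comp1 (cm_arr M) Uu)).
Proof.
  refine (@Build_NatTrans CoalgCat C (a_fun Uu) (a_fun (comp1 (cm_arr M) Uu))
            (fun A : CoalgCat => co_str A) _).
  intros A B t; simpl; symmetry; apply (ch_ax t).
Defined.

Definition omega : Arrow2 Uu (comp1 (cm_arr M) Uu).
Proof.
  refine {| t_nat := omega_nat |}.
  intros A a; exact (proj2_sig a).
Defined.

Definition coalg_2cell (D : Category) (Q : Doctrine D) (X : Arrow1 Q P)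
  (xi : Arrow2 X (comp1 (cm_arr M) X)) : Prop :=
  (forall d, mu (a_fun X d) ∘ t_nat xi d = fmap K (t_nat xi d) ∘ t_nat xi d) /\
  (forall d, nu (a_fun X d) ∘ t_nat xi d = idm (a_fun X d)).

Definition EM_lift (D : Category) (Q : Doctrine D) (X : Arrow1 Q P)
  (xi : Arrow2 X (comp1 (cm_arr M) X)) (X' : Arrow1 Q PK) : Prop :=
  comp1 Uu X' = X /\
  forall d, JMeq (t_nat omega (a_fun X' d)) (t_nat xi d).

End EM.

Arguments CoalgCat {C P} M.
Arguments PK {C P} M.
Arguments Uu {C P} M.
Arguments omega {C P} M.
Arguments coalg_2cell {C P} M {D Q X} xi.
Arguments EM_lift {C P} M {D Q X} xi X'.

(* An object of C_K is an object of C with extra structure, an element of P^K is an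
   element of P with an extra property, and a morphism of C_K is a morphism of C with an
   extra property.  So a 1-arrow (X,x) together with a coalgebraic 2-arrow xi lifts to
   P^K by equipping each X d with the coalgebra structure xi_d: naturality of xi makes
   every X f a coalgebra morphism, and the 2-arrow inequality of xi is exactly the
   membership condition of P^K.  The lift is unique because the only data added are the
   xi_d, and properties are proof-irrelevant.  Likewise a 2-arrow gamma whose components
   commute with the structures lifts, its inequality being checked in P. *)
From Stdlib Require Import JMeq ProofIrrelevance FunctionalExtensionality.
Set Implicit Arguments.
Unset Strict Implicit.

Lemma Functor_ext (C D : Category) (F G : Functor C D) :
  fobj F = fobj G ->
  (forall a b (f : hom a b), JMeq (fmap F f) (fmap G f)) -> F = G.
Proof.
  destruct F as [o m i c], G as [o' m' i' c']; simpl; intros e H; subst o'.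
  assert (m = m') as <-.
  { apply functional_extensionality_dep; intro a.
    apply functional_extensionality_dep; intro b.
    apply functional_extensionality; intro f. apply JMeq_eq, H. }
  rewrite (proof_irrelevance _ i i'), (proof_irrelevance _ c c'); reflexivity.
Qed.

Lemma Arrow1_ext (C D : Category) (P : Doctrine C) (Q : Doctrine D) (F G : Arrow1 P Q) :
  a_fun F = a_fun G -> (forall X (a : P X), JMeq (a_tr F a) (a_tr G a)) -> F = G.
Proof.
  destruct F as [f t m n], G as [f' t' m' n']; simpl; intros e H; subst f'.
  assert (t = t') as <-.
  { apply functional_extensionality_dep; intro a.
    apply functional_extensionality; intro x. apply JMeq_eq, H. }
  rewrite (proof_irrelevance _ m m'), (proof_irrelevance _ n n'); reflexivity.
Qed.

Lemma Arrow2_ext (C D : Category) (P : Doctrine C) (Q : Doctrine D) (F G : Arrow1 P Q)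
  (a b : Arrow2 F G) : (forall X, t_nat a X = t_nat b X) -> a = b.
Proof.
  destruct a as [[a na] la], b as [[b nb] lb]; simpl; intros H.
  assert (a = b) as <- by (apply functional_extensionality_dep; exact H).
  rewrite (proof_irrelevance _ na nb), (proof_irrelevance _ la lb); reflexivity.
Qed.

Section EilenbergMoore.
Variables (C : Category) (P : Doctrine C) (M : IdxComonad P).
Local Notation K := (a_fun (cm_arr M)).

Lemma Coalg_ext (A B : Coalg M) :
  co_car A = co_car B -> JMeq (co_str A) (co_str B) -> A = B.
Proof.
  destruct A as [a s u v], B as [b s' u' v']; simpl; intros e H; subst b.
  apply JMeq_eq in H; subst s'.
  rewrite (proof_irrelevance _ u u'), (proof_irrelevance _ v v'); reflexivity.
Qed.

Lemma CoalgHom_JMeq (A B A' B' : Coalg M) (f : CoalgHom A B) (g : CoalgHom A' B') :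
  A = A' -> B = B' -> JMeq (ch_map f) (ch_map g) -> JMeq f g.
Proof.
  intros -> -> H. apply JMeq_eq in H. rewrite (CoalgHom_eq H). constructor.
Qed.

Lemma PKfib_JMeq (A B : Coalg M) (a : PKfib A) (b : PKfib B) :
  A = B -> JMeq (proj1_sig a) (proj1_sig b) -> JMeq a b.
Proof.
  intros <- H. apply JMeq_eq in H. rewrite (sig_eq H). constructor.
Qed.

Section LiftArrow1.
Variables (D : Category) (Q : Doctrine D) (X : Arrow1 Q P).
Variables (xi : Arrow2 X (comp1 (cm_arr M) X)) (xi_coalg : coalg_2cell M xi).

Definition lift_coalg (d : D) : Coalg M :=
  {| co_car := a_fun X d; co_str := t_nat xi d;
     co_counit := proj2 xi_coalg d; co_coassoc := proj1 xi_coalg d |}.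

Definition lift_coalg_hom (a b : D) (f : hom a b) :
  CoalgHom (lift_coalg a) (lift_coalg b).
Proof.
  refine (@Build_CoalgHom C P M (lift_coalg a) (lift_coalg b) (fmap (a_fun X) f) _).
  simpl. symmetry. exact (naturality (t_nat xi) f).
Defined.

Definition lift_functor : Functor D (CoalgCat M).
Proof.
  refine {| fobj := (lift_coalg : D -> CoalgCat M);
            fmap := fun a b f => (lift_coalg_hom f : @hom (CoalgCat M) _ _) |}.
  - intro a; apply CoalgHom_eq; simpl; apply fmap_id.
  - intros; apply CoalgHom_eq; simpl; apply fmap_cmp.
Defined.

Definition lift_arrow1 : Arrow1 Q (PK M).
Proof.
  refine {| a_fun := lift_functor;
            a_tr := fun d a =>
              (exist _ (a_tr X a) (t_le xi a) : PK M (lift_functor d)) |}.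
  - intros d a b H; simpl. apply (a_mono X), H.
  - intros d e t b; apply sig_eq; simpl. apply (a_nat X).
Defined.

Lemma EM_lift_lift_arrow1 : EM_lift M xi lift_arrow1.
Proof.
  split.
  - apply Arrow1_ext.
    + apply Functor_ext; [reflexivity | intros; constructor].
    + intros; constructor.
  - intros; constructor.
Qed.

End LiftArrow1.

Lemma EM_lift_unique (D : Category) (Q : Doctrine D) (X : Arrow1 Q P)
  (xi : Arrow2 X (comp1 (cm_arr M) X)) (xi_coalg : coalg_2cell M xi)
  (X' : Arrow1 Q (PK M)) :
  EM_lift M xi X' -> lift_arrow1 xi_coalg = X'.
Proof.
  intros [HU Homega]. subst X.
  assert (Eobj : forall d, lift_coalg xi_coalg d = a_fun X' d).
  { intro d. apply Coalg_ext; [reflexivity |]. simpl. symmetry. apply Homega. }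
  apply Arrow1_ext.
  - apply Functor_ext.
    + apply functional_extensionality_dep; exact Eobj.
    + intros a b f. apply CoalgHom_JMeq; try apply Eobj. constructor.
  - intros d a. apply PKfib_JMeq; [apply Eobj | constructor].
Qed.

Section LiftArrow2.
Variables (D : Category) (Q : Doctrine D) (X' Y' : Arrow1 Q (PK M)).
Variable gamma : Arrow2 (comp1 (Uu M) X') (comp1 (Uu M) Y').
Hypothesis gamma_coalg : forall d,
  co_str (a_fun Y' d) ∘ t_nat gamma d = fmap K (t_nat gamma d) ∘ co_str (a_fun X' d).

Definition lift_arrow2_comp (d : D) : @hom (CoalgCat M) (a_fun X' d) (a_fun Y' d) :=
  {| ch_map := t_nat gamma d; ch_ax := gamma_coalg d |}.

Definition lift_nat : NatTrans (a_fun X') (a_fun Y').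
Proof.
  refine {| ncomp := lift_arrow2_comp |}.
  intros a b f. apply CoalgHom_eq. simpl. exact (naturality (t_nat gamma) f).
Defined.

Definition lift_arrow2 : Arrow2 X' Y' :=
  {| t_nat := lift_nat; t_le := fun d a => t_le gamma a |}.

Lemma lift_arrow2_unique (gamma' : Arrow2 X' Y') :
  (forall d, ch_map (t_nat gamma' d) = t_nat gamma d) -> gamma' = lift_arrow2.
Proof.
  intros H. apply Arrow2_ext. intro d. apply CoalgHom_eq. apply H.
Qed.

End LiftArrow2.

End EilenbergMoore.

Theorem theorem6p4 (C : Category) (P : Doctrine C) (M : IdxComonad P) :
  (* (a) *)
  (forall (D : Category) (Q : Doctrine D) (X : Arrow1 Q P)
          (xi : Arrow2 X (comp1 (cm_arr M) X)),
      coalg_2cell M xi ->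
      exists! X' : Arrow1 Q (PK M), EM_lift M xi X')
  /\
  (* (b) *)
  (forall (D : Category) (Q : Doctrine D)
          (X : Arrow1 Q P) (xi : Arrow2 X (comp1 (cm_arr M) X))
          (Y : Arrow1 Q P) (zeta : Arrow2 Y (comp1 (cm_arr M) Y))
          (X' Y' : Arrow1 Q (PK M)),
      coalg_2cell M xi -> coalg_2cell M zeta ->
      EM_lift M xi X' -> EM_lift M zeta Y' ->
      forall gamma : Arrow2 X Y,
        (forall d, t_nat zeta d ∘ t_nat gamma d
                   = fmap (a_fun (cm_arr M)) (t_nat gamma d) ∘ t_nat xi d) ->
        exists! gamma' : Arrow2 X' Y',
          forall d, JMeq (ch_map (t_nat gamma' d)) (t_nat gamma d)).
Proof.
  split.
  - intros D Q X xi xi_coalg. exists (lift_arrow1 xi_coalg). split.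
    + apply EM_lift_lift_arrow1.
    + apply EM_lift_unique.
  (* The coalgebra laws for xi and zeta are already built into X' and Y'. *)
  - intros D Q X xi Y zeta X' Y' _ _ [HX Hxi] [HY Hzeta] gamma Hgamma.
    subst X Y.
    assert (gamma_coalg : forall d, co_str (a_fun Y' d) ∘ t_nat gamma d
                                    = fmap (a_fun (cm_arr M)) (t_nat gamma d)
                                      ∘ co_str (a_fun X' d)).
    { intro d. specialize (Hgamma d).
      rewrite <- (JMeq_eq (Hxi d)), <- (JMeq_eq (Hzeta d)) in Hgamma. exact Hgamma. }
    exists (lift_arrow2 gamma_coalg). split.
    + intro d; constructor.
    + intros gamma' Hgamma'. symmetry. apply lift_arrow2_unique.
      intro d. apply JMeq_eq, Hgamma'.
Qed.
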